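(* Let $G$ be a profinite-$C$ group and let $A$ be a nontrivial abelian closed normal subgroup of $G$. Then $A$ is an internal cartesian product of $G$-invariant subgroups of $A$ of prime order.
   Context: A permutable complement of a subgroup $H$ of a group $G$ is a subgroup $K$ with $G=HK$ and $H\cap K=1$. A profinite group $G$ is a profinite-$C$ group if every closed subgroup of $G$ has a closed permutable complement in $G$. A profinite group $A$ is the internal cartesian product of a family $\{H_i\}_{i\in I}$ of its subgroups if: each $H_i$ is a closed normal subgroup of $A$; $A$ is the topological closure of $\langle H_i\mid i\in I\rangle$; and $\bigcap_{i\in I}\overline{\langle H_j\mid j\ne i\rangle}=1$. *)

From mathcomp Require Import all_boot all_order all_algebra.
From mathcomp Require Import all_classical all_reals all_analysis.
Set Implicit Arguments. Unset Strict Implicit. Unset Printing Implicit Defensive.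
Local Open Scope classical_set_scope.

Section ProfiniteDefs.
Variables (T : topologicalType) (mul : T -> T -> T) (inv : T -> T) (one : T).

Definition group_axioms : Prop :=
  [/\ forall x y z, mul x (mul y z) = mul (mul x y) z,
      forall x, mul one x = x, forall x, mul x one = x,
      forall x, mul (inv x) x = one & forall x, mul x (inv x) = one].

Definition topological_group : Prop :=
  [/\ group_axioms,
      continuous (fun p : T * T => mul p.1 p.2) & continuous inv].

Definition profinite_group : Prop :=
  [/\ topological_group, compact [set: T], hausdorff_space T
    & totally_disconnected [set: T]].

Definition is_subgroup (H : set T) : Prop :=
  [/\ H one, forall x y, H x -> H y -> H (mul x y) & forall x, H x -> H (inv x)].

Definition closed_subgroup (H : set T) : Prop := is_subgroup H /\ closed H.

Definition normalized_by (S H : set T) : Prop :=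
  forall g h, S g -> H h -> H (mul (inv g) (mul h g)).

Definition closed_normal_subgroup_of (A H : set T) : Prop :=
  [/\ closed_subgroup H, H `<=` A & normalized_by A H].

Definition abelian_set (A : set T) : Prop :=
  forall x y, A x -> A y -> mul x y = mul y x.

Definition permutable_complement (H K : set T) : Prop :=
  [/\ is_subgroup K,
      (forall g, exists h k, [/\ H h, K k & g = mul h k])
    & H `&` K = [set one]].

Definition profinite_C_group : Prop :=
  profinite_group /\
  forall H, closed_subgroup H ->
    exists K, closed_subgroup K /\ permutable_complement H K.

Definition gen_subgroup (S : set T) : set T :=
  \bigcap_(K in [set K | is_subgroup K /\ S `<=` K]) K.

Definition internal_cartesian_product (A : set T) (I : Type) (Hs : I -> set T)
  : Prop :=
  [/\ forall i, closed_normal_subgroup_of A (Hs i),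
      A = closure (gen_subgroup (\bigcup_i Hs i))
    & \bigcap_i closure (gen_subgroup (\bigcup_(j in [set j | j <> i]) Hs j))
        = [set one]].

Definition has_prime_order (H : set T) : Prop :=
  exists p : nat, prime p /\ (H #= `I_p)%card.

End ProfiniteDefs.

From mathcomp Require Import all_boot all_order all_algebra.
From mathcomp Require Import all_classical all_reals all_analysis.
Set Implicit Arguments. Unset Strict Implicit. Unset Printing Implicit Defensive.
Local Open Scope classical_set_scope.

(* A closed G-invariant subgroup M of A is of prime index if A / M is cyclic of
   prime order, and a family S of such subgroups is independent if each M in S
   misses some element of A that lies in all the other members of S.  By
   compactness independence survives unions of chains, so Zorn's lemma gives a
   maximal independent family S.  Its intersection with A is trivial: every
   nontrivial closed subgroup of a profinite C-group contains an element y of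
   prime order p (some power d^m of d <> 1 lies in an open subgroup avoiding d,
   and the component of d in a complement of the closure of <d^m> is a torsion
   element), and a complement of <y> in A is G-invariant because A is abelian,
   so it could be added to S.  Then each H_M = A ∩ ⋂_(M' <> M) M' has order p,
   the H_M generate a dense subgroup of A (compactness again), and the closure
   of the subgroup generated by the H_M' with M' <> M lies in M, while the
   members of S meet in 1. *)

Section CompactSpaces.
Variable T : topologicalType.

Definition directed_family (I : Type) (D : set I) (f : I -> set T) :=
  (exists i, D i) /\ forall i j, D i -> D j -> exists2 k, D k & f k `<=` f i `&` f j.

Lemma compact_directed_bigcap (K : set T) (I : Type) (D : set I) (f : I -> set T) :
  compact K -> (forall i, D i -> closed (f i)) -> directed_family D f ->
  (forall i, D i -> K `&` f i !=set0) -> exists z, K z /\ forall i, D i -> f i z.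
Proof.
move=> cK clf [[i0 Di0] dirf] nef.
pose F := filter_from D (fun i => K `&` f i).
have FF : ProperFilter F.
  apply: filter_from_proper => //; apply: filter_from_filter; first by exists i0.
  move=> i j Di Dj; have [k Dk fk] := dirf i j Di Dj.
  by exists k => // z [Kz /fk [fiz fjz]].
have [z [Kz clz]] : K `&` cluster F !=set0 by apply: cK; exists i0 => // z [].

exists z; split => // i Di; apply: clf => // B nB.
have [w [[_ fw] Bw]] := clz _ _ (ex_intro2 _ _ i Di (fun _ h => h)) nB.
by exists w.
Qed.

Lemma compact_directed_bigcap_sub (K : set T) (I : Type) (D : set I) (f : I -> set T)
    (W : set T) :
  compact K -> (forall i, D i -> closed (f i)) -> directed_family D f -> open W ->
  (forall z, K z -> (forall i, D i -> f i z) -> W z) ->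
  exists2 i, D i & K `&` f i `<=` W.
Proof.
move=> cK clf [neD dirf] oW KfW; apply: contrapT => nsub.
have [|||z [Kz fz]] := @compact_directed_bigcap K I D (fun i => f i `&` ~` W) cK.
- by move=> i Di; apply: closedI; [exact: clf | exact: open_closedC].
- split=> // i j Di Dj; have [k Dk fk] := dirf i j Di Dj.
  by exists k => // z [/fk [fiz fjz] nWz].
- move=> i Di; apply: contrapT => nKfW; apply: nsub; exists i => // z [Kz fiz].
  by apply: contrapT => nWz; apply: nKfW; exists z.
have [i0 Di0] := neD; have [_ nWz] := fz i0 Di0.
by apply: nWz; apply: KfW => // i /fz [].
Qed.

Lemma compact_closed_separated (B1 B2 : set T) :
  hausdorff_space T -> compact [set: T] -> closed B1 -> closed B2 ->
  (forall z, B1 z -> B2 z -> False) ->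
  exists U1 U2, [/\ open U1, open U2, B1 `<=` U1, B2 `<=` U2
                & forall z, U1 z -> U2 z -> False].
Proof.
move=> hT cT clB1 clB2 B12.
have [V /set_nbhsP [U1 [oU1 BU1 U1V]] clV] : filter_from (set_nbhs B1) closure (~` B2).
  apply: compact_normal => //; apply/set_nbhsP; exists (~` B2).
  by split=> //; exact: closed_openC.
exists U1, (~` closure V); split=> //.
- exact/closed_openC/closed_closure.
- by move=> z B2z /clV; apply.
- by move=> z /U1V Vz; apply; apply: subset_closure.
Qed.

Definition quasi_component (x : T) := \bigcap_(C in [set C | clopen C /\ C x]) C.

Lemma quasi_component_sub_open x (U U' : set T) : compact [set: T] ->
  open U -> open U' -> (forall z, U z -> U' z -> False) ->
  quasi_component x `<=` U `|` U' -> U x -> quasi_component x `<=` U.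
Proof.
move=> cT oU oU' UU' QU Ux.
have clopen_dir : directed_family [set C | clopen C /\ C x] id.
  split; first by exists setT; split; [exact: clopenT|].
  by move=> C1 C2 [cC1 C1x] [cC2 C2x]; exists (C1 `&` C2) => //; split; [exact: clopenI|].
have [C [cC Cx] CU] := compact_directed_bigcap_sub cT
  (fun C '(conj (conj _ clC) _) => clC) clopen_dir (openU oU oU') (fun z _ => QU z).
(* [C `&` U = C `&` ~` U'] is clopen and contains [x] *)
move=> z /(_ (C `&` U)) []//; split=> //; split; first by apply: openI => //; case: cC.
rewrite (_ : C `&` U = C `&` ~` U').
  by apply: closedI; [case: cC | exact: open_closedC].
apply/seteqP; split=> w [Cw Uw]; split=> //; first by move/(UU' w Uw).
by have [] := CU w (conj I Cw).
Qed.

Lemma connected_quasi_component x : hausdorff_space T -> compact [set: T] ->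
  connected (quasi_component x).
Proof.
move=> hT cT B [b Bb] [Op oO BQO] [F cF BQF]; set Q := quasi_component x.
have clQ : closed Q by apply: closed_bigI => C [[]].
have [|||U1 [U2 [oU1 oU2 BU1 QOU2 U12]]] := @compact_closed_separated B (Q `&` ~` Op) hT cT.
- by rewrite BQF; apply: closedI.
- by apply: closedI => //; apply: open_closedC.
- by move=> z; rewrite BQO => -[_ Oz] [_]; apply.
have QU : Q `<=` U1 `|` U2.
  move=> z Qz; have [Oz|nOz] := pselect (Op z); last by right; apply: QOU2.
  by left; apply: BU1; rewrite BQO.
have Qx : Q x by move=> C [].
have [U1x|U2x] := QU x Qx.
- have QU1 := quasi_component_sub_open cT oU1 oU2 U12 QU U1x.
  apply/seteqP; split=> [z|z Qz]; first by rewrite BQO => -[].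
  rewrite BQO; split=> //; apply: contrapT => nOz.
  exact: U12 (QU1 z Qz) (QOU2 z (conj Qz nOz)).
- have QU2 : Q `<=` U2.
    apply: quasi_component_sub_open cT oU2 oU1 (fun z h2 h1 => U12 z h1 h2) _ U2x.
    by move=> z /QU [];[right|left].
  have Qb : Q b by move: Bb; rewrite BQO => -[].
  by case: (U12 b (BU1 b Bb) (QU2 b Qb)).
Qed.

Lemma compact_totally_disconnected_zero_dimensional :
  hausdorff_space T -> compact [set: T] -> totally_disconnected [set: T] ->
  zero_dimensional T.
Proof.
move=> hT cT tdT x y /eqP xy; apply: contrapT => nsep.
have Qy : quasi_component x y.
  by move=> C [cC Cx]; apply: contrapT => nCy; apply: nsep; exists C.
have Qx : quasi_component x x by move=> C [].
have := connected_component_max Qx (fun _ _ => I)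
  (@connected_quasi_component x hT cT) Qy.
by rewrite tdT // => /= yx; apply: xy; rewrite yx.
Qed.
End CompactSpaces.

Lemma coprime_bezout k p : 0 < k -> coprime k p -> exists u v, k * u = 1 + v * p.
Proof.
move=> k0 /(coprimeP _ k0) [[u v] /= e]; exists u, v.
by rewrite mulnC addnC -e subnKC // ltnW // -subn_gt0 e.
Qed.

Section Groups.
Variables (T : topologicalType) (mul : T -> T -> T) (inv : T -> T) (one : T).
Hypothesis HG : group_axioms mul inv one.
Local Notation "x ⋅ y" := (mul x y) (at level 40, left associativity).
Local Notation is_subgroup := (is_subgroup mul inv one).

Lemma mulgA x y z : x ⋅ (y ⋅ z) = x ⋅ y ⋅ z. Proof. by case: HG. Qed.
Lemma mul1g x : one ⋅ x = x. Proof. by case: HG. Qed.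
Lemma mulg1 x : x ⋅ one = x. Proof. by case: HG. Qed.
Lemma mulVg x : inv x ⋅ x = one. Proof. by case: HG. Qed.
Lemma mulgV x : x ⋅ inv x = one. Proof. by case: HG. Qed.
Lemma mulKg x y : inv x ⋅ (x ⋅ y) = y. Proof. by rewrite mulgA mulVg mul1g. Qed.
Lemma mulVKg x y : x ⋅ (inv x ⋅ y) = y. Proof. by rewrite mulgA mulgV mul1g. Qed.
Lemma mulgK x y : y ⋅ x ⋅ inv x = y. Proof. by rewrite -mulgA mulgV mulg1. Qed.
Lemma mulgI x y z : x ⋅ y = x ⋅ z -> y = z.
Proof. by move=> e; rewrite -(mulKg x y) e mulKg. Qed.
Lemma mulg1_eq x y : x ⋅ y = one -> inv x = y.
Proof. by move=> e; apply: (@mulgI x); rewrite e mulgV. Qed.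
Lemma invgK x : inv (inv x) = x.
Proof. by apply: mulg1_eq; rewrite mulVg. Qed.
Lemma invgM x y : inv (x ⋅ y) = inv y ⋅ inv x.
Proof. by apply: mulg1_eq; rewrite -mulgA mulVKg mulgV. Qed.
Lemma invg1 : inv one = one.
Proof. by apply: mulg1_eq; rewrite mulg1. Qed.
Lemma commuteV x y : x ⋅ y = y ⋅ x -> inv x ⋅ y = y ⋅ inv x.
Proof. by move=> xy; apply: (@mulgI x); rewrite mulVKg mulgA xy mulgK. Qed.

Fixpoint gpow (x : T) (n : nat) : T := if n is n'.+1 then x ⋅ gpow x n' else one.

Lemma gpow1 x : gpow x 1 = x. Proof. exact: mulg1. Qed.
Lemma gpowD x m n : gpow x (m + n) = gpow x m ⋅ gpow x n.
Proof. by elim: m => [|m IH] /=; rewrite ?mul1g // IH mulgA. Qed.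
Lemma gpowM x m n : gpow x (m * n) = gpow (gpow x m) n.
Proof. by elim: n => [|n IH]; rewrite ?muln0 // mulnS gpowD IH. Qed.
Lemma gpow1n n : gpow one n = one.
Proof. by elim: n => //= n ->; rewrite mulg1. Qed.
Lemma commute_gpow x y n : x ⋅ y = y ⋅ x -> gpow x n ⋅ y = y ⋅ gpow x n.
Proof.
move=> xy; elim: n => [|n IH] /=; first by rewrite mul1g mulg1.
by rewrite -mulgA IH mulgA xy mulgA.
Qed.
Lemma gpowMc x y n : x ⋅ y = y ⋅ x -> gpow (x ⋅ y) n = gpow x n ⋅ gpow y n.
Proof.
move=> xy; elim: n => [|n IH] /=; first by rewrite mulg1.
rewrite IH -!mulgA; congr (x ⋅ _); rewrite !mulgA; congr (_ ⋅ gpow y n).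
by rewrite (commute_gpow _ xy).
Qed.
Lemma gpowV x n : inv (gpow x n) = gpow (inv x) n.
Proof.
elim: n => [|n IH]; first exact: invg1.
by rewrite /= invgM IH (commute_gpow _ (erefl (inv x ⋅ inv x))).
Qed.
Lemma gpow_mod x p n : gpow x p = one -> gpow x n = gpow x (n %% p).
Proof. by move=> xp; rewrite {1}(divn_eq n p) gpowD mulnC gpowM xp gpow1n mul1g. Qed.

Lemma prime_order_gpow k m : k <> one -> 0 < m -> gpow k m = one ->
  exists r p, [/\ prime p, gpow k r <> one & gpow (gpow k r) p = one].
Proof.
move=> k1 m0 km.
have ex_m : exists m, (0 < m) && (gpow k m == one) by exists m; rewrite m0 km eqxx.
case: (ex_minnP ex_m) => {m m0 km ex_m} m /andP [m0 /eqP km] minm.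
have m1 : 1 < m.
  by rewrite ltn_neqAle m0 andbT; apply/eqP => m1; apply: k1; rewrite -(gpow1 k) m1.
set p := pdiv m; set r := m %/ p.
have pp : prime p by rewrite pdiv_prime.
have rp : r * p = m by rewrite divnK // pdiv_dvd.
exists r, p; split => //; last by rewrite -gpowM rp.
move=> /eqP kr; have /minm : (0 < r) && (gpow k r == one).
  by rewrite kr andbT divn_gt0 ?prime_gt0 // dvdn_leq ?pdiv_dvd // ltnW.
by rewrite leqNgt ltn_Pdiv ?prime_gt1 // ltnW.
Qed.

Section Subgroups.
Variable H : set T.
Hypothesis sH : is_subgroup H.

Lemma subgroup1 : H one. Proof. by case: sH. Qed.
Lemma subgroupM x y : H x -> H y -> H (x ⋅ y). Proof. by case: sH => _ + _; apply. Qed.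
Lemma subgroupV x : H x -> H (inv x). Proof. by case: sH => _ _; apply. Qed.
Lemma subgroupVM x y : H x -> H y -> H (inv x ⋅ y).
Proof. by move=> Hx Hy; apply: subgroupM => //; apply: subgroupV. Qed.
Lemma subgroup_gpow x n : H x -> H (gpow x n).
Proof. by move=> Hx; elim: n => [|n IH] /=; [exact: subgroup1 | exact: subgroupM]. Qed.

Lemma subgroup_gpow_coprime c j p : 0 < j -> coprime j p ->
  H (gpow c p) -> H (gpow c j) -> H c.
Proof.
move=> j0 cop Hp Hj; have [u [v e]] := coprime_bezout j0 cop.
have := subgroupVM (subgroup_gpow v Hp) (subgroup_gpow u Hj).
by rewrite -!gpowM mulnC e addnC gpowD gpow1 mulKg.
Qed.

Definition congr_mod a b := H (inv a ⋅ b).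

Lemma congr_mod1 b : congr_mod one b = H b.
Proof. by rewrite /congr_mod invg1 mul1g. Qed.

Lemma congr_mod_sym a b : congr_mod a b -> congr_mod b a.
Proof. by move=> /subgroupV; rewrite /congr_mod invgM invgK. Qed.

Lemma congr_mod_trans a b c : congr_mod a b -> congr_mod b c -> congr_mod a c.
Proof. by move=> ab bc; have := subgroupM ab bc; rewrite -mulgA mulVKg. Qed.

Lemma congr_mod_mem a b : congr_mod a b -> H b -> H a.
Proof.
by move=> ab Hb; have := subgroupM Hb (subgroupV ab); rewrite invgM invgK mulVKg.
Qed.

Lemma congr_mod_exp x p n : H (gpow x p) -> congr_mod (gpow x (n %% p)) (gpow x n).
Proof.
move=> Hxp; rewrite /congr_mod {2}(divn_eq n p) addnC gpowD mulKg mulnC gpowM.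
exact: subgroup_gpow.
Qed.

End Subgroups.

Lemma cyclic_subgroup y p : 0 < p -> gpow y p = one ->
  is_subgroup [set gpow y j | j in `I_p].
Proof.
move=> p0 yp; split.
- by exists 0.
- move=> _ _ [i _ <-] [j _ <-]; exists ((i + j) %% p); first by rewrite /= ltn_mod.
  by rewrite -gpow_mod // gpowD.
- move=> _ [j /= jp <-]; exists ((p - j) %% p); first by rewrite /= ltn_mod.
  by rewrite -gpow_mod //; apply/esym/mulg1_eq; rewrite -gpowD subnKC // ltnW.
Qed.

Lemma gen_subgroupP X : is_subgroup (gen_subgroup mul inv one X).
Proof.
split.
- by move=> K [[]].
- by move=> x y Xx Xy K [sK XK]; apply: (subgroupM sK); [apply: Xx | apply: Xy].
- by move=> x Xx K [sK XK]; apply: (subgroupV sK); apply: Xx.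
Qed.

Lemma sub_gen_subgroup X : X `<=` gen_subgroup mul inv one X.
Proof. by move=> x Xx K [_ XK]; apply: XK. Qed.

Lemma closure_gen_subgroup_sub K X : closed_subgroup mul inv one K -> X `<=` K ->
  closure (gen_subgroup mul inv one X) `<=` K.
Proof.
move=> [sK clK] XK; apply: subset_trans clK; apply: closureS.
by move=> x; apply.
Qed.

Lemma conjgM_commute n x k : n ⋅ x = x ⋅ n ->
  inv (x ⋅ k) ⋅ (n ⋅ (x ⋅ k)) = inv k ⋅ (n ⋅ k).
Proof. by move=> nx; rewrite invgM [n ⋅ (x ⋅ k)]mulgA nx -!mulgA mulKg. Qed.

Lemma closed_normal_bigcap (D : set (set T)) :
  (forall K, D K -> closed_subgroup mul inv one K /\ normalized_by mul inv [set: T] K) ->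
  closed_subgroup mul inv one (\bigcap_(K in D) K) /\
  normalized_by mul inv [set: T] (\bigcap_(K in D) K).
Proof.
move=> hD; split; [split|].
- split.
  + by move=> K /hD [[sK _] _]; apply: subgroup1.
  + move=> x y Dx Dy K DK; have [[sK _] _] := hD K DK.
    by apply: (subgroupM sK); [apply: Dx | apply: Dy].
  + by move=> x Dx K DK; have [[sK _] _] := hD K DK; apply: (subgroupV sK); apply: Dx.
- by apply: closed_bigI => K /hD [[]].
- by move=> g x _ Dx K DK; have [_ nK] := hD K DK; apply: nK => //; apply: Dx.
Qed.

Section TopologicalGroup.
Hypothesis Hmul : continuous (fun p : T * T => p.1 ⋅ p.2).
Hypothesis Hinv : continuous inv.

Lemma nbhs_mul a b (W : set T) : nbhs (a ⋅ b) W ->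
  exists P Q, [/\ nbhs a P, nbhs b Q & forall x y, P x -> Q y -> W (x ⋅ y)].
Proof.
move=> /(@Hmul (a, b)) [[P Q] /= [nP nQ] sPQ].
by exists P, Q; split => // x y Px Qy; apply: (sPQ (x, y)).
Qed.

Lemma nbhs_mull a x (W : set T) : nbhs (a ⋅ x) W -> nbhs x [set y | W (a ⋅ y)].
Proof.
move=> /nbhs_mul [P [Q [nP nQ sPQ]]]; apply: filterS nQ => y Qy.
exact: sPQ (nbhs_singleton nP) Qy.
Qed.

Lemma nbhs_mulr a x (W : set T) : nbhs (x ⋅ a) W -> nbhs x [set y | W (y ⋅ a)].
Proof.
move=> /nbhs_mul [P [Q [nP nQ sPQ]]]; apply: filterS nP => y Py.
exact: sPQ Py (nbhs_singleton nQ).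
Qed.

Lemma nbhs_translate g (W : set T) : nbhs one W -> nbhs g [set y | W (inv g ⋅ y)].
Proof. by move=> nW; apply: nbhs_mull; rewrite mulVg. Qed.

Lemma closed_translate a (C : set T) : closed C -> closed [set y | C (a ⋅ y)].
Proof. by apply: preimage_closed => x _ W /nbhs_mull. Qed.

Lemma closure_subgroup S : is_subgroup S -> is_subgroup (closure S).
Proof.
move=> sS; split.
- by apply: subset_closure; exact: subgroup1.
- move=> x y clx cly B /nbhs_interior nB.
  have /cly [s [Ss /= Bs]] : nbhs y [set z | B° (x ⋅ z)] by apply: nbhs_mull.
  have /clx [t [St Bt]] : nbhs x [set z | B (z ⋅ s)] by apply: nbhs_mulr.
  by exists (t ⋅ s); split => //; exact: subgroupM.
- move=> x clx B /Hinv /clx [s [Ss Bs]].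
  by exists (inv s); split => //; exact: subgroupV.
Qed.

Lemma subgroup_nbhs1_closed U : is_subgroup U -> nbhs one U -> closed U.
Proof.
move=> sU nU p clp; have [h [Uh /= Uph]] := clp _ (nbhs_translate p nU).
have -> : p = h ⋅ inv (inv p ⋅ h) by rewrite invgM invgK mulVKg.
by apply: subgroupM => //; apply: subgroupV.
Qed.

Lemma closed_subgroup_centralizer d : hausdorff_space T ->
  closed_subgroup mul inv one [set g | g ⋅ d = d ⋅ g].
Proof.
move=> hT; split; first split => /=.
- by rewrite mul1g mulg1.
- by move=> x y xd yd; rewrite -mulgA yd !mulgA xd.
- by move=> x; apply: commuteV.
move=> p clp; apply: hT => B C nB nC.
have nI : nbhs p ([set y | B (y ⋅ d)] `&` [set y | C (d ⋅ y)]).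
  by apply: filterI; [apply: nbhs_mulr | apply: nbhs_mull].
have [y [/= yd [By Cy]]] := clp _ nI.
by exists (y ⋅ d); split => //; rewrite yd.
Qed.

Section Profinite.
Hypotheses (hT : hausdorff_space T) (cT : compact [set: T]).
Hypothesis tdT : totally_disconnected [set: T].

Lemma subgroup_nbhs1_in_clopen V : clopen V -> V one ->
  exists U, [/\ is_subgroup U, U `<=` V & nbhs one U].
Proof.
move=> [oV clV] V1; have cV : compact V by apply: subclosed_compact cT _.
pose O := [set o | V `<=` [set v | V (v ⋅ o)]].
have nO : nbhs one O.
  apply: (iffLR (compact_near_coveringP V) cV) => v Vv.
  have : nbhs (v ⋅ one) V by rewrite mulg1; apply: open_nbhs_nbhs.
  move=> /nbhs_mul [P [Q [nP nQ sPQ]]]; exists (P, Q); first by [].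
  by case=> a b [/= Pa Qb]; apply: sPQ.
have nOV : nbhs one [set o | O (inv o)] by apply: Hinv; rewrite invg1.
exists (O `&` [set o | O (inv o)]); split.
- split.
  + by split=> v Vv /=; rewrite ?invg1 mulg1.
  + move=> g h [Og Ogi] [Oh Ohi]; split=> v Vv /=; rewrite ?invgM mulgA.
    * exact/Oh/Og.
    * exact/Ogi/Ohi.
  + by move=> g [Og Ogi]; split => //=; rewrite invgK.
- by move=> g [Og _]; have /= := Og one V1; rewrite mul1g.
- exact: filterI.
Qed.

Lemma gpow_in_subgroup_nbhs1 U d : is_subgroup U -> nbhs one U ->
  exists2 m, 0 < m & U (gpow d m).
Proof.
move=> sU nU; pose tail n := closure [set gpow d k | k in [set k | n <= k]].
have [|||z [_ tailz]] := @compact_directed_bigcap _ _ _ [set: nat] tail cT.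
- by move=> n _; apply: closed_closure.
- split=> [|i j _ _]; first by exists 0.
  exists (maxn i j) => //; rewrite subsetI; split; apply: closureS => _ [k /= hk <-];
  by exists k => //=; apply: leq_trans hk; rewrite ?leq_maxl ?leq_maxr.
- by move=> n _; exists (gpow d n); split => //; apply: subset_closure; exists n => /=.
have nzU := nbhs_translate z nU.
have [_ [[k _ <-] Uk]] := tailz 0 I _ nzU.
have [_ [[l /= kl <-] Ul]] := tailz k.+1 I _ nzU.
exists (l - k); first by rewrite subn_gt0.
have := subgroupVM sU Uk Ul.
by rewrite invgM invgK -mulgA mulVKg -{1}(subnKC (ltnW kl)) gpowD mulKg.
Qed.

Section ComplementedSubgroups.
Hypothesis HC : forall H, closed_subgroup mul inv one H ->
  exists K, closed_subgroup mul inv one K /\ permutable_complement mul inv one H K.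

Lemma exists_torsion E d : closed_subgroup mul inv one E -> E d -> d <> one ->
  exists k m, [/\ E k, k <> one, 0 < m & gpow k m = one].
Proof.
move=> [sE clE] Ed d1.
have [V [cV V1 nVd]] : exists V : set T, [/\ clopen V, V one & ~ V d].
  apply: compact_totally_disconnected_zero_dimensional => //.
  by apply/eqP => /esym.
have [U [sU UV nU]] := subgroup_nbhs1_in_clopen cV V1.
have [m m0 Udm] := gpow_in_subgroup_nbhs1 d sU nU.
(* the closed subgroup generated by [d ^ m] lies in [U], hence avoids [d] *)
pose Z := closure (gen_subgroup mul inv one [set gpow d m]).
have cZ : closed_subgroup mul inv one Z.
  by split; [apply/closure_subgroup/gen_subgroupP | apply: closed_closure].
have subZ K : closed_subgroup mul inv one K -> K (gpow d m) -> Z `<=` K.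
  by move=> cK Kd; apply: closure_gen_subgroup_sub cK _ => _ ->.
have ZU : Z `<=` U by apply: subZ => //; split=> //; apply: subgroup_nbhs1_closed.
have ZE : Z `<=` E by apply: subZ => //; apply: subgroup_gpow.
have Zd : Z `<=` [set g | g ⋅ d = d ⋅ g].
  apply: subZ; first exact: closed_subgroup_centralizer.
  exact: commute_gpow.
have Zdm : Z (gpow d m) by apply: subset_closure; apply: sub_gen_subgroup.
have [K [[sK _] [_ dec ZK]]] := HC cZ.
have [z [k [Zz Kk dzk]]] := dec d.
have kE : k = inv z ⋅ d by rewrite dzk mulKg.
exists k, m; split => //.
- by rewrite kE; apply: subgroupVM => //; apply: ZE.
- by move=> k1; apply/nVd/UV/ZU; rewrite dzk k1 mulg1.
have : (Z `&` K) (gpow k m); last by rewrite ZK.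
split; last exact: subgroup_gpow.
rewrite kE gpowMc -?gpowV; last exact/commuteV/Zd.
by apply: (subgroupVM (proj1 cZ)) => //; apply: subgroup_gpow Zz; case: cZ.
Qed.

Lemma exists_prime_order E d : closed_subgroup mul inv one E -> E d -> d <> one ->
  exists y p, [/\ E y, y <> one, prime p & gpow y p = one].
Proof.
move=> cE Ed d1; have [k [m [Ek k1 m0 km]]] := exists_torsion cE Ed d1.
have [r [p [pp kr1 krp]]] := prime_order_gpow k1 m0 km.
by exists (gpow k r), p; split => //; apply: subgroup_gpow Ek; case: cE.
Qed.

Section AbelianNormalSubgroup.
Variable A : set T.
Hypotheses (cA : closed_subgroup mul inv one A) (nA : normalized_by mul inv [set: T] A).
Hypothesis abA : abelian_set mul A.

Let sA := proj1 cA.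

Lemma normal_complement X : closed_subgroup mul inv one X -> X `<=` A ->
  exists N, [/\ closed_subgroup mul inv one N, N `<=` A, normalized_by mul inv [set: T] N,
    forall a, A a -> exists2 x, X x & congr_mod N x a
  & forall z, X z -> N z -> z = one].
Proof.
move=> cX XA; have [K [[sK clK] [_ dec XK]]] := HC cX.
exists (A `&` K); split.
- split; last by apply: closedI => //; case: cA.
  split; first by split; apply: subgroup1.
  + by move=> x y [Ax Kx] [Ay Ky]; split; apply: subgroupM.
  + by move=> x [Ax Kx]; split; apply: subgroupV.
- by move=> z [].
- (* [x] lies in the abelian [A], so it drops out of the conjugation by [x k] *)
  move=> g n _ [An Kn]; have [x [k [Xx Kk ->]]] := dec g.
  rewrite conjgM_commute; last by apply: abA => //; apply: XA.
  split; first exact: nA.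
  by apply: subgroupVM => //; apply: subgroupM.
- move=> a Aa; have [x [k [Xx Kk akx]]] := dec a.
  exists x => //; rewrite /congr_mod akx mulKg; split => //.
  by rewrite -(mulKg x k) -akx; apply: subgroupVM => //; apply: XA.
- by move=> z Xz [_ Kz]; have : (X `&` K) z by []; rewrite XK.
Qed.

Lemma congr_modM M a a' b b' : is_subgroup M -> M `<=` A -> A b ->
  congr_mod M a a' -> congr_mod M b b' -> congr_mod M (a ⋅ b) (a' ⋅ b').
Proof.
move=> sM MA Ab aa' bb'; rewrite /congr_mod invgM -mulgA [inv a ⋅ _]mulgA mulgA.
rewrite [inv b ⋅ _](abA (subgroupV sA Ab) (MA _ aa')) -mulgA.
exact: subgroupM.
Qed.

Lemma congr_mod_gpow M a b n : is_subgroup M -> M `<=` A -> A a ->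
  congr_mod M a b -> congr_mod M (gpow a n) (gpow b n).
Proof.
move=> sM MA Aa ab; elim: n => [|n IH] /=.
  by rewrite /congr_mod invg1 mulg1; apply: subgroup1.
by apply: congr_modM => //; apply: subgroup_gpow.
Qed.

(* [A / M] is cyclic of order [p], generated by the coset of [c] *)
Definition cyclic_quotient M c p := [/\ A c, ~ M c, M (gpow c p)
  & forall a, A a -> exists2 j, j < p & congr_mod M (gpow c j) a].

Definition invariant_subgroup M :=
  [/\ closed_subgroup mul inv one M, M `<=` A & normalized_by mul inv [set: T] M].

Definition invariant_of_prime_index M :=
  invariant_subgroup M /\ exists c p, prime p /\ cyclic_quotient M c p.

Lemma cyclic_quotient_gen M c p x : is_subgroup M -> M `<=` A -> prime p ->
  cyclic_quotient M c p -> A x -> ~ M x -> cyclic_quotient M x p.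
Proof.
move=> sM MA pp [Ac nMc Mcp decc] Ax nMx.
have [k kp ckx] := decc x Ax.
have k0 : 0 < k.
  by rewrite lt0n; apply/eqP => k0; apply: nMx; move: ckx; rewrite k0 /= congr_mod1.
have [u [v e]] : exists u v, k * u = 1 + v * p.
  by apply: coprime_bezout => //; rewrite coprime_sym prime_coprime // gtnNdvd.
have Ack : A (gpow c k) by apply: subgroup_gpow.
have cux : congr_mod M c (gpow x u).
  apply: congr_mod_trans (congr_mod_gpow u sM MA Ack ckx) => //.
  rewrite -gpowM e gpowD gpow1 /congr_mod mulKg mulnC gpowM.
  exact: subgroup_gpow.
have Mxp : M (gpow x p).
  rewrite -(congr_mod1 M); apply: congr_mod_trans (congr_mod_gpow p sM MA Ack ckx) => //.
  by rewrite congr_mod1 -gpowM mulnC gpowM; apply: subgroup_gpow.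
split => // a Aa; have [j jp cja] := decc a Aa.
exists ((u * j) %% p); first by rewrite ltn_mod prime_gt0.
apply: (congr_mod_trans sM (congr_mod_exp sM (u * j) Mxp)).
rewrite gpowM; apply: (congr_mod_trans sM _ cja); apply: congr_mod_sym => //.
exact: congr_mod_gpow.
Qed.

Lemma cyclic_quotient_inj M x p : is_subgroup M -> prime p ->
  cyclic_quotient M x p -> {in `I_p &, injective (gpow x)}.
Proof.
move=> sM pp [_ nMx Mxp _].
have gpow_neq a b : a < b < p -> gpow x a <> gpow x b.
  case/andP=> ab bp xab; apply: nMx.
  apply: (subgroup_gpow_coprime sM (j := b - a)) Mxp _.
  - by rewrite subn_gt0.
  - rewrite coprime_sym prime_coprime // gtnNdvd ?subn_gt0 //.
    exact: leq_ltn_trans (leq_subr a b) bp.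
  have : gpow x a ⋅ gpow x (b - a) = gpow x a by rewrite -gpowD subnKC // ltnW.
  by rewrite -[RHS]mulg1 => /mulgI ->; apply: subgroup1.
move=> i j; rewrite !in_setE /= => ip jp xij.
case: (ltngtP i j) => [ij|ji|//]; first by case: (gpow_neq i j); rewrite ?ij.
by case: (gpow_neq j i); rewrite ?ji.
Qed.

Lemma exists_invariant_of_prime_index y p : A y -> y <> one -> prime p ->
  gpow y p = one -> exists N, invariant_subgroup N /\ cyclic_quotient N y p.
Proof.
move=> Ay y1 pp yp; pose X := [set gpow y j | j in `I_p].
have cX : closed_subgroup mul inv one X.
  split; first exact: cyclic_subgroup (prime_gt0 pp) yp.
  by apply: compact_closed => //; apply/finite_compact/finite_image.
have XA : X `<=` A by move=> _ [j _ <-]; apply: subgroup_gpow.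
have [N [cN NA nN decA XN]] := normal_complement cX XA.
exists N; split=> //; split=> //.
- move=> Ny; apply: y1 (XN y _ Ny).
  by exists 1; [exact: prime_gt1 | exact: gpow1].
- by rewrite yp; case: cN => -[].
- by move=> a /decA [_ [j /= jp <-] Nja]; exists j.
Qed.

Definition capA (S : set (set T)) := \bigcap_(K in A |` S) K.

Lemma capAP S x : capA S x <-> A x /\ forall M, S M -> M x.
Proof.
split=> [h|[Ax Sx] K [->|/Sx]] //.
by split=> [|M SM]; apply: h; [left|right].
Qed.

Lemma capA_invariant S : S `<=` invariant_of_prime_index -> invariant_subgroup (capA S).
Proof.
move=> Si; have [cS nS] : closed_subgroup mul inv one (capA S) /\
    normalized_by mul inv [set: T] (capA S).
  by apply: closed_normal_bigcap => K [->|/Si [[cK _ nK] _]].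
by split=> // x /capAP [].
Qed.

Definition independent (S : set (set T)) :=
  S `<=` invariant_of_prime_index /\
  forall M, S M -> exists2 x, capA (S `\ M) x & ~ M x.

Lemma independent_chain (F : set (set (set T))) : F `<=` independent ->
  total_on F subset -> independent (\bigcup_(S in F) S).
Proof.
move=> Fi Ft; split=> [M [S FS]|M [S0 FS0 S0M]]; first exact: (Fi S FS).1.
have [[[sM clM] MA _] [c [p [pp cq]]]] := (Fi S0 FS0).1 M S0M.
have [Ac nMc _ _] := cq.
pose outside S := \bigcap_(M' in S `\ M) M'.
have outside_anti S S' : S `<=` S' -> outside S' `<=` outside S.
  by move=> SS' x h M' [SM' M'M]; apply: h; split=> //; apply: SS'.
(* taking witnesses in the compact coset [A `&` c M] keeps a limit point out of [M] *)
have [||||z [[Az cz] zS]] := @compact_directed_bigcap _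
  (A `&` [set z | M (inv c ⋅ z)]) _ [set S | F S /\ S M] outside.
- apply: subclosed_compact cT _ => //; apply: closedI; first by case: cA.
  exact: closed_translate.
- by move=> S [FS _]; apply: closed_bigI => M' [/(Fi S FS).1 [[[_ ]]]].
- split=> [|S1 S2 [FS1 S1M] [FS2 S2M]]; first by exists S0.
  have [S12|S21] := Ft S1 S2 FS1 FS2; [exists S2|exists S1] => //;
    by rewrite subsetI; split=> //; apply: outside_anti.
- move=> S [FS SM]; have [x /capAP [Ax xS] nMx] := (Fi S FS).2 M SM.
  have [_ _ _ decx] := cyclic_quotient_gen sM MA pp cq Ax nMx.
  have [j _ xjc] := decx c Ac.
  exists (gpow x j); split; first split.
  + exact: subgroup_gpow.
  + exact: congr_mod_sym.
  + by move=> M' /[dup] /xS M'x [/(Fi S FS).1 [[[sM' _] _ _] _] _]; apply: subgroup_gpow.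
exists z; last by move=> Mz; apply/nMc/(congr_mod_mem sM cz).
apply/capAP; split=> // M' [[S1 FS1 S1M'] M'M].
have [S01|S10] := Ft S0 S1 FS0 FS1.
- by apply: (zS S1); [split=> //; apply: S01 | split].
- by apply: (zS S0); [split | split=> //; apply: S10].
Qed.

Lemma independent_extend S d : independent S -> capA S d -> d <> one ->
  exists B, S `<` B /\ independent B.
Proof.
move=> [Si Sw] Sd d1; have [cS _ _] := capA_invariant Si.
have [y [p [/capAP [Ay yS] y1 pp yp]]] := exists_prime_order cS Sd d1.
have [N [iN cqN]] := exists_invariant_of_prime_index Ay y1 pp yp.
have [_ nNy _ decN] := cqN.
have nSN : ~ S N by move=> /yS.
exists (N |` S); split.
  by split=> [M SM|/(_ N (or_introl erefl))//]; right.
split=> [M [->|/Si//]|M]; first by split=> //; exists y, p.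
case=> [->|SM].
  by exists y => //; apply/capAP; split=> // M' [[->|/yS//] /(_ erefl)].
have [[[sM _] _ _] _] := Si M SM.
have [x0 /capAP [Ax0 x0S] nMx0] := Sw M SM.
(* correct the old witness [x0] by a power of [y] so that it lies in [N] *)
have [j _ yjx0] := decN x0 Ax0.
have Myj : M (gpow y j) by apply: (subgroup_gpow sM); apply: yS.
exists (inv (gpow y j) ⋅ x0).
  apply/capAP; split; first by apply: (subgroupVM sA) => //; apply: subgroup_gpow.
  move=> M' [[->|SM'] M'M] //; have [[[sM' _] _ _] _] := Si M' SM'.
  by apply: (subgroupVM sM'); [apply: (subgroup_gpow sM'); apply: yS | apply: x0S].
by move=> Mx; apply/nMx0; rewrite -(mulVKg (gpow y j) x0); apply: (subgroupM sM).
Qed.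

Lemma independent_cofactor S M : independent S -> capA S `<=` [set one] -> S M ->
  exists x p, [/\ prime p, capA (S `\ M) = [set gpow x j | j in `I_p],
    {in `I_p &, injective (gpow x)} & cyclic_quotient M x p].
Proof.
move=> [Si Sw] S1 SM.
have [[[sM _] MA _] [c [p [pp cq]]]] := Si M SM.
have [x Hx nMx] := Sw M SM; have /capAP [Ax _] := Hx.
have cqx := cyclic_quotient_gen sM MA pp cq Ax nMx.
have [_ _ _ decx] := cqx.
have [[sH _] _ _] : invariant_subgroup (capA (S `\ M)).
  by apply: capA_invariant => M' [/Si].
exists x, p; split => //.
- apply/seteqP; split=> [z Hz|_ [j _ <-]]; last exact: (subgroup_gpow sH j Hx).
  have /capAP [Az _] := Hz; have [j jp xjz] := decx z Az.
  have /capAP [_ Hw] := subgroupVM sH (subgroup_gpow sH j Hx) Hz.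
  have /S1 w1 : capA S (inv (gpow x j) ⋅ z).
    apply/capAP; split=> [|M' SM']; first by apply: MA.
    by have [->|M'M] := pselect (M' = M); last by apply: Hw.
  by exists j => //; rewrite -(mulg1_eq w1) invgK.
- exact: cyclic_quotient_inj cqx.
Qed.

Lemma capA_finite_sub S U : S `<=` invariant_of_prime_index -> capA S `<=` [set one] ->
  open U -> U one ->
  exists2 L : seq (set T),
    (forall M, M \in L -> S M) & A `&` \bigcap_(M in [set` L]) M `<=` U.
Proof.
move=> Si S1 oU U1.
apply: (compact_directed_bigcap_sub (subclosed_compact _ cT _)) => //.
- by case: cA.
- by move=> L LS; apply: closed_bigI => M /LS /Si [[[_]]].
- split=> [|L1 L2 LS1 LS2]; first by exists [::].
  exists (L1 ++ L2); first by move=> M; rewrite mem_cat => /orP [/LS1|/LS2].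
  by move=> z Lz; split=> M ML; apply: Lz; rewrite /= mem_cat ML ?orbT.
move=> z Az Lz; have -> // : z = one.
apply/S1/capAP; split=> // M SM.
apply: (Lz [:: M]); first by move=> M'; rewrite inE => /eqP ->.
by rewrite /= inE.
Qed.

Definition cofactor_span S :=
  gen_subgroup mul inv one (\bigcup_(i : {M | S M}) capA (S `\ sval i)).

Lemma cofactor_decomposition S (L : seq (set T)) : independent S -> capA S `<=` [set one] ->
  (forall M, M \in L -> S M) -> forall b, A b ->
  exists2 h, cofactor_span S h & (A `&` \bigcap_(M in [set` L]) M) (inv h ⋅ b).
Proof.
move=> iS S1; have sG : is_subgroup (cofactor_span S) by apply: gen_subgroupP.
elim: L => [|M L IH] LS b Ab.
  by exists one; [apply: subgroup1 | rewrite invg1 mul1g].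
have SM : S M by apply: LS; rewrite inE eqxx.
have LS' M' : M' \in L -> S M' by move=> ML; apply: LS; rewrite inE ML orbT.
have [h Gh [Am Lm]] := IH LS' b Ab.
have [x [p [_ Hx _ [_ _ _ decx]]]] := independent_cofactor iS S1 SM.
have [j jp xjm] := decx _ Am.
have Hxj : capA (S `\ M) (gpow x j) by rewrite Hx; exists j.
have /capAP [Axj xjS] := Hxj.
exists (h ⋅ gpow x j).
  by apply: (subgroupM sG Gh); apply: sub_gen_subgroup; exists (exist _ M SM).
rewrite invgM -mulgA; split; first exact: (subgroupVM sA).
move=> M' /=; rewrite inE => /orP [/eqP ->//|M'L].
have [[[sM' _] _ _] _] := iS.1 M' (LS' M' M'L).
have [->//|M'M] := pselect (M' = M).
by apply: (subgroupVM sM'); [apply: xjS; split=> //; apply: LS' | apply: Lm].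
Qed.

Lemma independent_dense S : independent S -> capA S `<=` [set one] ->
  A `<=` closure (cofactor_span S).
Proof.
move=> iS S1 a Aa W nW.
have nO : nbhs one [set z | W (a ⋅ inv z)].
  have : nbhs (a ⋅ inv one) W by rewrite invg1 mulg1.
  by move=> /nbhs_mull; apply: Hinv.
have [L LS LO] := capA_finite_sub iS.1 S1 (@open_interior _ _) nO.
have [h Gh /LO /interior_subset /=] := cofactor_decomposition iS S1 LS Aa.
by rewrite invgM invgK mulVKg; exists h.
Qed.

Lemma independent_bigcap S : independent S -> capA S `<=` [set one] ->
  (exists M, S M) ->
  \bigcap_(i : {M | S M}) closure (gen_subgroup mul inv one
     (\bigcup_(j in [set j | j <> i]) capA (S `\ sval j))) = [set one].
Proof.
move=> [Si _] Smax [M0 SM0]; apply/seteqP; split=> [z hz|_ -> i _]; last first.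
  by apply: subset_closure; apply: subgroup1; apply: gen_subgroupP.
apply/Smax/capAP; split.
  by apply: (closure_gen_subgroup_sub cA _ (hz (exist _ M0 SM0) I)) => t [j _ /capAP []].
move=> M SM; have [[cM _ _] _] := Si M SM.
apply: (closure_gen_subgroup_sub cM _ (hz (exist _ M SM) I)).
move=> t [[M' SM'] /= ne /capAP [_]]; apply; split=> // MM'.
by apply: ne; apply: eq_exist; rewrite MM'.
Qed.

Lemma abelian_normal_cartesian_product : A <> [set one] ->
  exists (I : Type) (Hs : I -> set T),
    internal_cartesian_product mul inv one A Hs /\
    forall i, [/\ is_subgroup (Hs i), Hs i `<=` A,
                  normalized_by mul inv [set: T] (Hs i) & has_prime_order (Hs i)].
Proof.
move=> A1; have [S [iS Smax]] := Zorn_bigcup independent_chain.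
have S1 : capA S `<=` [set one].
  move=> d Sd; apply: contrapT => d1.
  by have [B [SB iB]] := independent_extend iS Sd d1; apply: Smax iB.
have neS : exists M, S M.
  apply: contrapT => nS; apply/A1/seteqP; split=> [a Aa|_ ->]; last exact: subgroup1.
  by apply/S1/capAP; split=> // M SM; case: nS; exists M.
pose Hs (i : {M | S M}) := capA (S `\ sval i).
have iH i : invariant_subgroup (Hs i) by apply: capA_invariant => M [/iS.1].
exists {M | S M}, Hs; split; first split.
- by move=> i; have [cH HA nH] := iH i; split=> // g h _; apply: nH.
- apply/seteqP; split; first exact: independent_dense.
  by apply: closure_gen_subgroup_sub cA _ => t [i _ /capAP []].
- exact: independent_bigcap.
- case=> M SM; have [[sH _] HA nH] := iH (exist _ M SM); split=> //.
  have [x [p [pp HE xinj _]]] := independent_cofactor iS S1 SM.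
  by exists p; split=> //; rewrite /Hs /= HE; apply: inj_card_eq.
Qed.

End AbelianNormalSubgroup.
End ComplementedSubgroups.
End Profinite.
End TopologicalGroup.
End Groups.

Theorem lemma2p9 (T : topologicalType) (mul : T -> T -> T) (inv : T -> T)
  (one : T) (A : set T) :
  profinite_C_group mul inv one ->
  closed_subgroup mul inv one A ->
  normalized_by mul inv [set: T] A ->
  abelian_set mul A ->
  A <> [set one] ->
  exists (I : Type) (Hs : I -> set T),
    internal_cartesian_product mul inv one A Hs /\
    forall i, [/\ is_subgroup mul inv one (Hs i), Hs i `<=` A,
                  normalized_by mul inv [set: T] (Hs i)
                & has_prime_order (Hs i)].
Proof.
move=> [[[HG Hmul Hinv] cT hT tdT] HC] cA nA abA.
exact: abelian_normal_cartesian_product.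
Qed.
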